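(* For every $\delta>0$ there exists $\varepsilon'>0$ such that the following holds for every $\varepsilon\in(0,\varepsilon')$ and every sufficiently large $n$. Let $s'$ be a positive integer, let $H_1,H_2$ be vertex-disjoint multigraphs, each on $n$ vertices, in each of which every pair of vertices is joined by exactly $s'$ parallel edges, let $H=(V(H_1)\cup V(H_2),E(H_1)\cup E(H_2))$, and let $b\leq (1-\delta)\frac{s'n}{\log(n)}$. Then the strategy $\mathcal{S}^+$ is a winning strategy for Maker in the game $\mathrm{MinDeg}^+\!\left(H,\frac{\varepsilon s'n}{b},b,\varepsilon\right)$.
   Context: $\log$ is the natural logarithm. For a multigraph $G$, real $d>0$, integer $b\geq 1$ and $\alpha\in(0,1)$, the game $\mathrm{MinDeg}^+(G,d,b,\alpha)$ is a $(1:b)$ Maker-Breaker game on the edges of $G$ in which Breaker moves first: in each round Breaker claims $b$ unclaimed edges and Maker claims one edge. Whenever Maker claims an edge she immediately gives it a direction; Maker is allowed to claim the same edge twice in two different rounds, so as to give it both directions. Let $d_M^+(v)$ denote Maker's outdegree at $v$, $d_B(v)$ the number of Breaker's edges at $v$, and $d_G(v)$ the degree of $v$ in $G$. Maker wins if for every vertex $v\in V(G)$ she reaches $d_M^+(v)=d$ before $d_B(v)\geq(1-\alpha)d_G(v)$ first happens. A vertex $v$ is called active as long as $d_M^+(v)<d$, and its danger is $\mathrm{dang}(v)=d_B(v)-2b\cdot d_M^+(v)$. Strategy $\mathcal{S}^+$: in every round Maker picks an active vertex $v$ of largest danger, claims an arbitrary edge at $v$ that is not claimed by Breaker and is not already an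 outgoing Maker edge at $v$, and directs it to be outgoing at $v$. *)

From mathcomp Require Import all_boot.
From Stdlib Require Import Reals ZArith.

Set Implicit Arguments.
Unset Strict Implicit.
Unset Printing Implicit Defensive.

(* A finite multigraph: vertex type V, edge type E (each element of E  *)
(* is one edge, so parallel edges are distinct elements), and the two  *)
(* endpoints of each edge.                                             *)
Section Game.
Variables (V E : finType) (ends : E -> V * V).

Definition incident (e : E) (v : V) : bool :=
  ((ends e).1 == v) || ((ends e).2 == v).

Definition degG (v : V) : nat := #|[set e | incident e v]|.

(* A game position: Breaker's edges B, and Maker's directed claims M,
   where (e, v) \in M means Maker claimed e directed outgoing at v. *)

Definition degB (B : {set E}) (v : V) : nat := #|[set e in B | incident e v]|.

Definition outdeg (M : {set E * V}) (v : V) : nat :=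
  #|[set p in M | p.2 == v]|.

Definition unclaimed (B : {set E}) (M : {set E * V}) (e : E) : bool :=
  (e \notin B) && [forall u : V, (e, u) \notin M].

Definition breaker_move (b : nat) (B : {set E}) (M : {set E * V})
  (S : {set E}) : Prop :=
  S \subset [set e | unclaimed B M e] /\
  #|S| = minn b #|[set e | unclaimed B M e]|.

Definition active (d : R) (M : {set E * V}) (v : V) : Prop :=
  (INR (outdeg M v) < d)%R.

Definition danger (b : nat) (B : {set E}) (M : {set E * V}) (v : V) : Z :=
  (Z.of_nat (degB B v) - 2 * Z.of_nat b * Z.of_nat (outdeg M v))%Z.

Definition max_danger_active (b : nat) (d : R) (B : {set E})
  (M : {set E * V}) (v : V) : Prop :=
  active d M v /\
  forall u : V, active d M u -> (danger b B M u <= danger b B M v)%Z.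

Definition maker_available (B : {set E}) (M : {set E * V}) (e : E) (v : V)
  : Prop :=
  incident e v /\ e \notin B /\ (e, v) \notin M.

Definition splus_move (b : nat) (d : R) (B : {set E}) (M : {set E * V})
  (e : E) (v : V) : Prop :=
  max_danger_active b d B M v /\ maker_available B M e v.

(* Positions reachable when Maker follows S^+ (with arbitrary tie
   breaking and arbitrary choice of edge) against an arbitrary Breaker.
   reachB: Breaker to move; reachM: Maker to move. Breaker moves first. *)
Inductive reachB (b : nat) (d : R) : {set E} -> {set E * V} -> Prop :=
| reachB_start : reachB b d set0 set0
| reachB_step : forall B M e v,
    reachM b d B M -> splus_move b d B M e v ->
    reachB b d B ((e, v) |: M)
with reachM (b : nat) (d : R) : {set E} -> {set E * V} -> Prop :=
| reachM_step : forall B M S,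
    reachB b d B M -> breaker_move b B M S -> reachM b d (B :|: S) M.

Definition maker_lost (d alpha : R) (B : {set E}) (M : {set E * V}) : Prop :=
  exists v : V,
    ((1 - alpha) * INR (degG v) <= INR (degB B v))%R /\ active d M v.

(* S^+ is a winning strategy for Maker in MinDeg^+(G, d, b, alpha):
   against every Breaker play and for every choice allowed by S^+,
   (i) Maker never loses, and (ii) whenever it is Maker's turn and some
   vertex is still active, the strategy prescribes a legal move (for
   every admissible choice of the active vertex of largest danger).
   Since each Maker move adds a new element to the finite set M, (i) and
   (ii) imply that every vertex eventually reaches outdegree d before
   Breaker reaches (1 - alpha) d_G at it. *)
Definition splus_wins (b : nat) (d alpha : R) : Prop :=
  (forall B M, (reachB b d B M \/ reachM b d B M) -> ~ maker_lost d alpha B M)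
  /\
  (forall B M, reachM b d B M ->
     forall v, max_danger_active b d B M v ->
       exists e, maker_available B M e v).

End Game.

(* The multigraph H = H_1 \cup H_2: two vertex-disjoint copies (tagged  *)
(* by a bool) of the complete multigraph on n vertices in which each   *)
(* pair of distinct vertices is joined by exactly s parallel edges.    *)
(* An edge is (copy, (u, w), label) with u < w and label < s.          *)
Definition HV (n : nat) : finType := (bool * 'I_n)%type.

Definition HEdge (n s : nat) : Type :=
  {x : bool * ('I_n * 'I_n) * 'I_s | (x.1.2.1 < x.1.2.2)%nat}.

Definition HE (n s : nat) : finType := HEdge n s.

Definition Hends (n s : nat) (e : HE n s) : HV n * HV n :=
  let x := val e in ((x.1.1, x.1.2.1), (x.1.1, x.1.2.2)).

From mathcomp Require Import all_boot zify.
From Stdlib Require Import Reals Lra Lia.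

(* Maker's strategy is analysed through two potentials of a set J of k active
   vertices: its total danger, and the number of Breaker's edges meeting J
   minus 2b times Maker's outdegree from J. With m vertices and edge
   multiplicity at most s, the first stays below 2bk ln(m/k) and, for k <= K,
   the second below k (2b ln(m/K) + b ln(K/k) + s(K - k)), both bounds being
   relaxed by 2b, resp. b, right after Breaker's move; the two bounds agree at
   k = K. Breaker's b edges raise the first potential by at most 2b but the
   second by at most b, since it counts every edge once: this is what halves
   the leading term. Maker's move at the most dangerous active vertex v pays
   2b back on every J containing v; if J avoids v, the average danger of J is
   at most dang v, and ln (1 + 1/k) >= 1/(k + 1) carries the bound for
   J + v down to J. For J = {w} and K = n/q this bounds dang w by about
   b ln n + b ln (8q) + sK, which for q ~ 8/delta and b <= (1 - delta) s'n / ln n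
   stays below (1 - eps) s'(n - 1) - 3 eps s'n: Breaker can never claim
   (1 - eps) d_G(w) edges at an active w, and every active vertex keeps a free
   edge. *)

Set Implicit Arguments.
Unset Strict Implicit.
Unset Printing Implicit Defensive.

Section RealFacts.
Local Open Scope R_scope.

Lemma ln_le x y : 0 < x -> x <= y -> ln x <= ln y.
Proof. by move=> x0 [xy|<-]; [left; apply: ln_increasing | right]. Qed.

Lemma ln_succ_sub_ge x : 0 < x -> 1 <= (x + 1) * (ln (x + 1) - ln x).
Proof.
move=> x0.
have x1 : 0 < x + 1 by lra.
(* [1 + y <= exp y] at [y = - 1 / (x + 1)] gives [ln (x / (x + 1)) <= - 1 / (x + 1)]. *)
have hexp := exp_ineq1_le (- / (x + 1)).
rewrite (_ : 1 + - / (x + 1) = x / (x + 1)) in hexp; last by field; lra.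
have hq : 0 < x / (x + 1) by apply: Rdiv_lt_0_compat.
have := ln_le hq hexp; rewrite ln_exp /Rdiv ln_mult ?ln_Rinv //; last exact: Rinv_0_lt_compat.
move=> h.
have := Rmult_le_compat_l (x + 1) _ _ (Rlt_le _ _ x1) h.
have -> : (x + 1) * - / (x + 1) = -1 by field; lra.
lra.
Qed.

Lemma le_of_extension (k X D Y Z : R) :
  0 < k -> X <= k * D -> X + D <= Y -> k * Y <= (k + 1) * Z -> X <= Z.
Proof.
move=> k0 XD XY YZ.
apply: (Rmult_le_reg_l (k + 1)); first lra.
have : k * (X + D) <= k * Y by apply: Rmult_le_compat_l; lra.
lra.
Qed.

End RealFacts.

Lemma card_bigcup_le (I T : finType) (J : {set I}) (F : I -> {set T}) :
  #|\bigcup_(i in J) F i| <= \sum_(i in J) #|F i|.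
Proof.
elim/big_rec2: _ => [|i n S _ IH]; first by rewrite cards0.
by apply: leq_trans (leq_card_setU _ _) _; rewrite leq_add2l.
Qed.

Section Board.
Variables (V E : finType) (ends : E -> V * V).

Definition edges_at (B : {set E}) (J : {set V}) : {set E} :=
  \bigcup_(u in J) [set e in B | incident ends e u].

Definition sum_degB (B : {set E}) (J : {set V}) : nat :=
  \sum_(u in J) degB ends B u.

Definition sum_outdeg (M : {set E * V}) (J : {set V}) : nat :=
  \sum_(u in J) outdeg M u.

Lemma card_edges_at_le B J : #|edges_at B J| <= sum_degB B J.
Proof. exact: card_bigcup_le. Qed.

Lemma edges_at_set1 B w : edges_at B [set w] = [set e in B | incident ends e w].
Proof. by rewrite /edges_at big_set1. Qed.

Lemma card_incident (S : {set E}) u :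
  #|[set e in S | incident ends e u]| = \sum_(e in S) incident ends e u.
Proof.
rewrite -sum1_card big_mkcond [RHS]big_mkcond.
by apply: eq_bigr => e _; rewrite !inE; case: (e \in S); case: incident.
Qed.

Lemma sum_incident_le2 e (J : {set V}) : \sum_(u in J) incident ends e u <= 2.
Proof.
have sum_eq1 (a : V) : \sum_u (a == u : nat) = 1.
  by rewrite (bigD1 a) //= eqxx big1 // => u /negbTE; rewrite eq_sym => ->.
rewrite -[2]/(1 + 1) -{1}(sum_eq1 (ends e).1) -(sum_eq1 (ends e).2) -big_split.
rewrite [X in _ <= X](bigID (mem J)) /=; apply: leq_trans (leq_addr _ _).
by apply: leq_sum => u _; rewrite /incident; case: eqP; case: eqP.
Qed.

Lemma sum_degB_setU B S J : sum_degB (B :|: S) J <= sum_degB B J + 2 * #|S|.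
Proof.
have degB_setU u : degB ends (B :|: S) u <= degB ends B u + #|[set e in S | incident ends e u]|.
  apply: leq_trans (leq_card_setU _ _); apply: subset_leq_card.
  by apply/subsetP => e; rewrite !inE => /andP[/orP[]-> ->]; rewrite ?orbT.
rewrite /sum_degB.
apply: leq_trans; first by apply: leq_sum => u _; apply: degB_setU.
rewrite big_split leq_add2l /=.
under eq_bigr do rewrite card_incident.
rewrite exchange_big -sum1_card big_distrr leq_sum // => e _.
exact: sum_incident_le2.
Qed.

Lemma card_edges_at_setU B S J : #|edges_at (B :|: S) J| <= #|edges_at B J| + #|S|.
Proof.
apply: leq_trans (leq_card_setU _ _); apply: subset_leq_card.
apply/subsetP => e /bigcupP[u uJ]; rewrite !inE => /andP[/orP[eB|->] eu]; last by rewrite orbT.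
by apply/orP; left; apply/bigcupP; exists u; rewrite // inE eB.
Qed.

Lemma outdeg_setU1 (M : {set E * V}) e v u : (e, v) \notin M ->
  outdeg ((e, v) |: M) u = outdeg M u + (u == v).
Proof.
move=> evM; rewrite /outdeg.
have [->|uv] := eqVneq u v.
  have -> : [set p in (e, v) |: M | p.2 == v] = (e, v) |: [set p in M | p.2 == v].
    by apply/setP => p; rewrite !inE; case: (eqVneq p (e, v)) => [->|]; rewrite ?eqxx.
  by rewrite cardsU1 inE (negbTE evM) addn1.
rewrite /= addn0; apply: eq_card => p; rewrite !inE.
by case: (eqVneq p (e, v)) => [->|] //=; rewrite eq_sym (negbTE uv) andbF.
Qed.

Lemma sum_outdeg_setU1 (M : {set E * V}) e v J : (e, v) \notin M ->
  sum_outdeg ((e, v) |: M) J = sum_outdeg M J + (v \in J).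
Proof.
move=> evM; rewrite /sum_outdeg.
under eq_bigr do rewrite outdeg_setU1 //.
rewrite big_split /=; congr (_ + _).
have [vJ|vJ] := boolP (v \in J).
  by rewrite (bigD1 v) //= eqxx big1 // => u /andP[_ /negbTE ->].
by rewrite big1 // => u uJ; apply/eqP; rewrite eqb0; apply: contraNneq vJ => <-.
Qed.

Lemma degG_le_free B (M : {set E * V}) v :
  degG ends v <= degB ends B v + outdeg M v +
    #|[set e | [&& incident ends e v, e \notin B & (e, v) \notin M]]|.
Proof.
have claimed_le : #|[set e | (e, v) \in M]| <= outdeg M v.
  rewrite /outdeg -(card_imset _ (f := fun e => (e, v))); last by move=> x y [].
  apply: subset_leq_card; apply/subsetP => p /imsetP[e]; rewrite inE => evM ->.
  by rewrite inE evM eqxx.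
apply: (@leq_trans #|[set e in B | incident ends e v] :|: [set e | (e, v) \in M] :|:
    [set e | [&& incident ends e v, e \notin B & (e, v) \notin M]]|).
  apply: subset_leq_card; apply/subsetP => e; rewrite !inE => ->.
  by case: (e \in B); case: ((e, v) \in M).
apply: leq_trans (leq_card_setU _ _) _; rewrite leq_add2r.
by apply: leq_trans (leq_card_setU _ _) _; rewrite leq_add2l.
Qed.

Variable s : nat.
Hypothesis multiplicity : forall u v : V, u != v ->
  #|[set e | incident ends e u && incident ends e v]| <= s.

Lemma card_edges_at_setU1 B (J : {set V}) v : v \notin J ->
  #|edges_at B J| + degB ends B v <= #|edges_at B (v |: J)| + s * #|J|.
Proof.
move=> vJ.
rewrite /edges_at big_setU1 //= -/(edges_at B J) addnC /degB -cardsUI leq_add2l.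
apply: (@leq_trans #|\bigcup_(u in J) [set e | incident ends e u && incident ends e v]|).
  apply: subset_leq_card; apply/subsetP => e; rewrite !inE => /andP[/andP[_ ev]].
  move=> /bigcupP[u uJ]; rewrite inE => /andP[_ eu].
  by apply/bigcupP; exists u; rewrite // inE eu ev.
apply: leq_trans (card_bigcup_le _ _) _.
rewrite mulnC -sum_nat_const leq_sum // => u uJ; apply: multiplicity.
by apply: contraNneq vJ => <-.
Qed.

End Board.

Scheme reachB_mutind := Induction for reachB Sort Prop
with reachM_mutind := Induction for reachM Sort Prop.
Combined Scheme reach_mutind from reachB_mutind, reachM_mutind.

Section Potential.
Variables (V E : finType) (ends : E -> V * V) (s b : nat) (d : R) (m K : nat).
Hypothesis multiplicity : forall u v : V, u != v ->
  #|[set e | incident ends e u && incident ends e v]| <= s.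
Hypotheses (K_gt0 : (0 < K)%nat) (K_le_m : (K <= m)%nat) (card_V_le_m : (#|V| <= m)%nat).

Local Open Scope R_scope.

Definition rdanger (B : {set E}) (M : {set E * V}) (v : V) : R :=
  INR (degB ends B v) - 2 * INR b * INR (outdeg M v).

Definition danger_sum (B : {set E}) (M : {set E * V}) (J : {set V}) : R :=
  INR (sum_degB ends B J) - 2 * INR b * INR (sum_outdeg M J).

Definition danger_cover (B : {set E}) (M : {set E * V}) (J : {set V}) : R :=
  INR #|edges_at ends B J| - 2 * INR b * INR (sum_outdeg M J).

Definition sum_bound (k : nat) : R := 2 * INR b * INR k * (ln (INR m) - ln (INR k)).

Definition cover_bound (k : nat) : R :=
  INR k * (2 * INR b * (ln (INR m) - ln (INR K)) + INR b * (ln (INR K) - ln (INR k))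
           + INR s * (INR K - INR k)).

Definition potential_inv (B : {set E}) (M : {set E * V}) (beta : R) : Prop :=
  forall J : {set V}, (0 < #|J|)%nat -> {in J, forall u, active d M u} ->
  danger_sum B M J <= sum_bound #|J| + 2 * beta /\
  ((#|J| <= K)%nat -> danger_cover B M J <= cover_bound #|J| + beta).

Lemma sum_bound_succ k : (0 < k)%nat ->
  INR k * (sum_bound k.+1 + 2 * INR b) <= (INR k + 1) * sum_bound k.
Proof.
move=> k_gt0; rewrite /sum_bound S_INR.
have k0 : 0 < INR k by apply: lt_0_INR; apply/ltP.
have := ln_succ_sub_ge k0; set L := ln (INR k + 1) - ln (INR k) => hL.
have : 0 <= 2 * INR b * INR k * ((INR k + 1) * L - 1).
  by apply: Rmult_le_pos; [apply: Rmult_le_pos; have := pos_INR b|]; lra.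
rewrite /L; lra.
Qed.

Lemma cover_bound_succ k : (0 < k)%nat ->
  INR k * (cover_bound k.+1 + INR b + INR s * INR k) <= (INR k + 1) * cover_bound k.
Proof.
move=> k_gt0; rewrite /cover_bound S_INR.
have k0 : 0 < INR k by apply: lt_0_INR; apply/ltP.
have := ln_succ_sub_ge k0; set L := ln (INR k + 1) - ln (INR k) => hL.
have : 0 <= INR b * INR k * ((INR k + 1) * L - 1).
  by apply: Rmult_le_pos; [apply: Rmult_le_pos; have := pos_INR b|]; lra.
have : 0 <= INR s * INR k by apply: Rmult_le_pos; have := pos_INR s; lra.
rewrite /L; lra.
Qed.

Lemma cover_bound_K : cover_bound K = sum_bound K.
Proof. rewrite /cover_bound /sum_bound; ring. Qed.

Lemma active_setU1 (M : {set E * V}) e v u : (e, v) \notin M ->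
  active d ((e, v) |: M) u -> active d M u.
Proof.
by move=> evM; rewrite /active outdeg_setU1 // plus_INR; have := pos_INR (u == v); lra.
Qed.

Lemma danger_cover_le_sum B M J : danger_cover B M J <= danger_sum B M J.
Proof.
rewrite /danger_cover /danger_sum.
have /leP/le_INR := card_edges_at_le ends B J; lra.
Qed.

Lemma danger_cover_set1 B M w : danger_cover B M [set w] = rdanger B M w.
Proof. by rewrite /danger_cover /rdanger edges_at_set1 /sum_outdeg big_set1. Qed.

Lemma danger_sum_setU1 B M (J : {set V}) v : v \notin J ->
  danger_sum B M (v |: J) = rdanger B M v + danger_sum B M J.
Proof.
move=> vJ; rewrite /danger_sum /rdanger /sum_degB /sum_outdeg !big_setU1 //= !plus_INR.
ring.
Qed.

Lemma danger_cover_setU1 B M (J : {set V}) v : v \notin J ->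
  danger_cover B M J + rdanger B M v <= danger_cover B M (v |: J) + INR s * INR #|J|.
Proof.
move=> vJ; rewrite /danger_cover /rdanger {2}/sum_outdeg big_setU1 //= -/(sum_outdeg M J).
have /leP/le_INR := card_edges_at_setU1 multiplicity B vJ.
rewrite !plus_INR mult_INR; lra.
Qed.

Lemma danger_sum_le_max B M (J : {set V}) v :
  {in J, forall u, (danger ends b B M u <= danger ends b B M v)%Z} ->
  danger_sum B M J <= INR #|J| * rdanger B M v.
Proof.
move=> vmax.
have : (sum_degB ends B J + #|J| * (2 * b * outdeg M v)
        <= #|J| * degB ends B v + 2 * b * sum_outdeg M J)%nat.
  rewrite /sum_degB /sum_outdeg -!sum_nat_const big_distrr /= -!big_split /=.
  by apply: leq_sum => u /vmax; rewrite /danger; lia.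
move/leP/le_INR; rewrite !plus_INR !mult_INR /danger_sum /rdanger /=; lra.
Qed.

Lemma potential_inv0 : potential_inv set0 set0 0.
Proof.
move=> J J_gt0 _.
have sum_degB0 : sum_degB ends set0 J = 0%nat.
  by rewrite /sum_degB big1 // => u _; apply/eqP; rewrite cards_eq0; apply/eqP/setP => e; rewrite !inE.
have sum_outdeg0 : sum_outdeg (set0 : {set E * V}) J = 0%nat.
  by rewrite /sum_outdeg big1 // => u _; apply/eqP; rewrite cards_eq0; apply/eqP/setP => p; rewrite !inE.
have edges_at0 : #|edges_at ends set0 J| = 0%nat.
  by apply/eqP; rewrite -leqn0 -sum_degB0 card_edges_at_le.
rewrite /danger_sum /danger_cover sum_degB0 sum_outdeg0 edges_at0 /= /sum_bound /cover_bound.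
have J0 : 0 < INR #|J| by apply: lt_0_INR; apply/ltP.
have J_le_m : INR #|J| <= INR m by apply: le_INR; apply/leP; apply: leq_trans (max_card _) _.
have b0 := pos_INR b; have s0 := pos_INR s.
split=> [|J_le_K].
  have := ln_le J0 J_le_m.
  have : 0 <= 2 * INR b * INR #|J| by apply: Rmult_le_pos; lra.
  rewrite /= Rmult_0_r; nra.
have J_le_K' : INR #|J| <= INR K by apply: le_INR; apply/leP.
have K_le_m' : INR K <= INR m by apply: le_INR; apply/leP.
have := ln_le J0 J_le_K'; have := ln_le (Rlt_le_trans _ _ _ J0 J_le_K') K_le_m'.
move=> lnK_le lnJ_le.
have : 0 <= INR b * (ln (INR m) - ln (INR K)) by apply: Rmult_le_pos; lra.
have : 0 <= INR b * (ln (INR K) - ln (INR #|J|)) by apply: Rmult_le_pos; lra.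
have : 0 <= INR s * (INR K - INR #|J|) by apply: Rmult_le_pos; lra.
rewrite /= Rmult_0_r; nra.
Qed.

Lemma potential_inv_breaker B M S :
  potential_inv B M 0 -> breaker_move b B M S -> potential_inv (B :|: S) M (INR b).
Proof.
move=> inv [_ card_S] J J_gt0 J_active.
have [sum_le cover_le] := inv J J_gt0 J_active.
have /leP/le_INR S_le_b : (#|S| <= b)%nat by rewrite card_S geq_minl.
have /leP/le_INR := sum_degB_setU ends B S J; rewrite plus_INR mult_INR /= => sum_degB_le.
have /leP/le_INR := card_edges_at_setU ends B S J; rewrite plus_INR => edges_le.
rewrite /danger_sum /danger_cover in sum_le cover_le *.
split=> [|/cover_le]; lra.
Qed.

Lemma potential_inv_avoiding B M (J : {set V}) v :
  potential_inv B M (INR b) -> max_danger_active ends b d B M v ->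
  (0 < #|J|)%nat -> {in J, forall u, active d M u} -> v \notin J ->
  danger_sum B M J <= sum_bound #|J| /\
  ((#|J| <= K)%nat -> danger_cover B M J <= cover_bound #|J|).
Proof.
move=> inv [v_active vmax] J_gt0 J_active vJ.
have J'_active : {in v |: J, forall u, active d M u}.
  by move=> u /setU1P[->|/J_active].
have J'_gt0 : (0 < #|v |: J|)%nat by rewrite cardsU1 vJ.
have [sum_le' cover_le'] := inv (v |: J) J'_gt0 J'_active.
rewrite cardsU1 vJ add1n danger_sum_setU1 // in sum_le' cover_le'.
set k := #|J| in J_gt0 sum_le' cover_le' *.
have k0 : 0 < INR k by apply: lt_0_INR; apply/ltP.
have sum_le_max : danger_sum B M J <= INR k * rdanger B M v.
  by apply: danger_sum_le_max => u /J_active /vmax.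
have sum_le : danger_sum B M J <= sum_bound k.
  by apply: (le_of_extension k0 sum_le_max _ (sum_bound_succ J_gt0)); lra.
split=> // k_le_K.
have cover_le_sum := danger_cover_le_sum B M J.
have [k_lt_K|K_le_k] := ltnP k K; last first.
  have k_eq_K : k = K by apply/eqP; rewrite eqn_leq k_le_K K_le_k.
  by rewrite k_eq_K cover_bound_K -k_eq_K; lra.
apply: (le_of_extension k0 (Rle_trans _ _ _ cover_le_sum sum_le_max) _ (cover_bound_succ J_gt0)).
have := danger_cover_setU1 B M vJ; have := cover_le' k_lt_K; rewrite -/k; lra.
Qed.

Lemma potential_inv_maker B M e v :
  potential_inv B M (INR b) -> splus_move ends b d B M e v ->
  potential_inv B ((e, v) |: M) 0.
Proof.
move=> inv [vmax [_ [_ evM]]] J J_gt0 J_active.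
have {}J_active : {in J, forall u, active d M u}.
  by move=> u /J_active; apply: active_setU1.
rewrite /danger_sum /danger_cover sum_outdeg_setU1 //.
have [vJ|vJ] := boolP (v \in J); last first.
  rewrite /= addn0 Rmult_0_r !Rplus_0_r.
  exact: potential_inv_avoiding inv vmax J_gt0 J_active vJ.
have [sum_le cover_le] := inv J J_gt0 J_active.
rewrite /danger_sum /danger_cover in sum_le cover_le.
have := pos_INR b; rewrite addn1 S_INR; split=> [|/cover_le]; lra.
Qed.

Lemma reachable_potential_inv :
  (forall B M, reachB ends b d B M -> potential_inv B M 0) /\
  (forall B M, reachM ends b d B M -> potential_inv B M (INR b)).
Proof.
apply: (reach_mutind (P := fun B M _ => potential_inv B M 0)
                     (P0 := fun B M _ => potential_inv B M (INR b))).
- exact: potential_inv0.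
- by move=> B M e v _ inv move_ev; apply: potential_inv_maker.
- by move=> B M S _ inv move_S; apply: potential_inv_breaker.
Qed.

Lemma reachable_rdanger_le B M w :
  reachB ends b d B M \/ reachM ends b d B M -> active d M w ->
  rdanger B M w <= cover_bound 1 + INR b.
Proof.
move=> reach w_active.
have [beta [beta_le inv]] : exists beta, beta <= INR b /\ potential_inv B M beta.
  case: reach => [/(proj1 reachable_potential_inv)|/(proj2 reachable_potential_inv)] inv.
    by exists 0; split=> //; apply: pos_INR.
  by exists (INR b); split=> //; apply: Rle_refl.
have w_in : {in [set w], forall u, active d M u} by move=> u /set1P ->.
have w_gt0 : (0 < #|[set w]|)%nat by rewrite cards1.
have [_ cover_le] := inv [set w] w_gt0 w_in.
rewrite cards1 danger_cover_set1 in cover_le; have := cover_le K_gt0; lra.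
Qed.

End Potential.

Section Criterion.
Variables (V E : finType) (ends : E -> V * V) (b : nat) (d alpha Lambda : R).
Local Open Scope R_scope.

Lemma splus_wins_of_rdanger_le :
  (forall B M w, reachB ends b d B M \/ reachM ends b d B M -> active d M w ->
     rdanger ends b B M w <= Lambda) ->
  0 <= alpha ->
  (forall v, Lambda + (2 * INR b + 1) * d <= (1 - alpha) * INR (degG ends v)) ->
  splus_wins ends b d alpha.
Proof.
move=> rdanger_le alpha0 degG_ge; have b0 := pos_INR b.
split=> [B M reach [w [lost w_active]] | B M reach v [v_active _]].
  have := rdanger_le B M w reach w_active; have := degG_ge w.
  rewrite /rdanger; rewrite /active in w_active.
  have := pos_INR (outdeg M w).
  have : INR b * INR (outdeg M w) <= INR b * d by apply: Rmult_le_compat_l; lra.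
  lra.
have [free0|free_gt0] := posnP #|[set e | [&& incident ends e v, e \notin B & (e, v) \notin M]]|;
  last first.
  have [e] := card_gt0P free_gt0.
  by rewrite inE => /and3P[ev eB evM]; exists e.
exfalso.
have /leP/le_INR := degG_le_free ends B M v; rewrite free0 addn0 plus_INR.
have := rdanger_le B M v (or_intror reach) v_active; have := degG_ge v.
rewrite /rdanger; rewrite /active in v_active.
have := pos_INR (outdeg M v); have := pos_INR (degG ends v).
have : (2 * INR b + 1) * INR (outdeg M v) < (2 * INR b + 1) * d.
  by apply: Rmult_lt_compat_l; lra.
have : 0 <= alpha * INR (degG ends v) by apply: Rmult_le_pos; [|apply: pos_INR].
lra.
Qed.

End Criterion.

Section CompleteMultigraphs.
Variables (n s : nat).

Lemma Hends_incident2 (e : HE n s) (u v : HV n) : u != v ->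
  incident (@Hends n s) e u -> incident (@Hends n s) e v ->
  Hends e = if (u.2 < v.2)%nat then (u, v) else (v, u).
Proof.
case: e => [[[c [i j]] l] /= ij] uv.
rewrite /incident /Hends /=.
case/orP => /eqP u_eq; case/orP => /eqP v_eq; subst u v; rewrite ?eqxx // in uv.
- by rewrite /= ij.
- by rewrite /= ltnNge (ltnW ij).
Qed.

Lemma H_multiplicity (u v : HV n) : u != v ->
  (#|[set e | incident (@Hends n s) e u && incident (@Hends n s) e v]| <= s)%nat.
Proof.
move=> uv; rewrite -[X in (_ <= X)%nat]card_ord.
apply: (@leq_card_in _ _ (fun e : HE n s => (val e).2)).
move=> e1 e2; rewrite !inE => /andP[e1u e1v] /andP[e2u e2v] same_label.
have := Hends_incident2 uv e1u e1v; rewrite -(Hends_incident2 uv e2u e2v).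
case: e1 e2 {e1u e1v e2u e2v} same_label => [[[c1 [i1 j1]] l1] /= p1] [[[c2 [i2 j2]] l2] /= p2].
by rewrite /Hends /= => l_eq [*]; subst; apply: val_inj.
Qed.

Lemma H_degG (v : HV n) : (s * n.-1 <= degG (@Hends n s) v)%nat.
Proof.
case: v => c i.
pose other (e : HE n s) := (if (val e).1.2.1 == i then (val e).1.2.2 else (val e).1.2.1, (val e).2).
have <- : #|setX [set~ i] [set: 'I_s]| = (s * n.-1)%nat.
  by rewrite cardsX cardsC1 cardsT !card_ord mulnC.
apply: leq_trans (leq_imset_card other _).
apply: subset_leq_card; apply/subsetP => -[j l]; rewrite !inE andbT => ji.
case: (ltngtP i j) => [ij|ji'|/ord_inj eq_ij]; last by rewrite eq_ij eqxx in ji.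
- apply/imsetP; exists (exist _ (c, (i, j), l) ij : HE n s).
    by rewrite inE /incident /Hends /= eqxx.
  by rewrite /other /= eqxx.
- apply/imsetP; exists (exist _ (c, (j, i), l) ji' : HE n s).
    by rewrite inE /incident /Hends /= eqxx orbT.
  by rewrite /other /= (negbTE ji).
Qed.

Lemma card_HV : #|HV n| = (2 * n)%nat.
Proof. by rewrite /HV card_prod card_bool card_ord. Qed.

End CompleteMultigraphs.

Section Budget.
Local Open Scope R_scope.

Lemma ln_div_bound (n q : nat) : (0 < q)%nat -> (q <= n)%nat ->
  2 * ln (INR (2 * n)) - ln (INR (n %/ q)) <= ln (INR n) + ln (8 * INR q).
Proof.
move=> q_gt0 q_le_n.
have K_gt0 : (0 < n %/ q)%nat by rewrite divn_gt0.
have n_le : (n <= 2 * q * (n %/ q))%nat by have := ltn_ceil n q_gt0; nia.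
have n_leR : INR n <= 2 * INR q * INR (n %/ q).
  by have /leP/le_INR := n_le; rewrite !mult_INR /=; lra.
have n0 : 0 < INR n by apply: lt_0_INR; apply/ltP; apply: leq_trans q_le_n.
have q0 : 0 < INR q by apply: lt_0_INR; apply/ltP.
have K0 : 0 < INR (n %/ q) by apply: lt_0_INR; apply/ltP.
have -> : INR (2 * n) = 2 * INR n by rewrite mult_INR.
have : ln (2 * INR n * (2 * INR n)) <= ln (INR n * (8 * INR q) * INR (n %/ q)).
  by apply: ln_le; nra.
by rewrite !ln_mult; nra.
Qed.

Lemma cover_bound_1 s b m K :
  cover_bound s b m K 1 = INR b * (2 * ln (INR m) - ln (INR K)) + INR s * (INR K - 1).
Proof. rewrite /cover_bound /= ln_1; ring. Qed.

Lemma mul_ln_le_of_le_div (y c x : R) : 1 < x -> y <= c / ln x -> y * ln x <= c.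
Proof.
move=> x1 y_le; have lnx0 : 0 < ln x by rewrite -ln_1; apply: ln_increasing; lra.
have := Rmult_le_compat_r _ _ _ (Rlt_le _ _ lnx0) y_le.
by have -> : c / ln x * ln x = c by field; lra.
Qed.

Lemma INR_divn_le (n q : nat) (c : R) : 0 < c -> c < INR q -> INR (n %/ q) <= INR n / c.
Proof.
move=> c0 c_lt; apply: (Rmult_le_reg_r c) => //.
have -> : INR n / c * c = INR n by field; lra.
have /leP/le_INR := leq_divM n q; rewrite mult_INR.
by have := pos_INR (n %/ q); nra.
Qed.

Lemma mul_succ_double_div_le (b X : R) : 1 <= b -> 0 <= X -> (2 * b + 1) * (X / b) <= 3 * X.
Proof.
move=> b1 X0.
have b_inv : / b <= 1 by rewrite -Rinv_1; apply: Rinv_le_contravar; lra.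
have -> : (2 * b + 1) * (X / b) = X * (2 + / b) by field; lra.
nra.
Qed.

Lemma H_budget (de eps : R) (q n s b : nat) :
  0 < de -> 0 < eps -> eps < de / 8 -> 8 / de < INR q -> (2 * q <= n)%nat ->
  (0 < s)%nat -> (0 < b)%nat ->
  exp (4 * (ln (8 * INR q) + 1) / de) < INR n ->
  INR b <= (1 - de) * (INR s * INR n) / ln (INR n) ->
  forall v : HV n,
  cover_bound s b (2 * n) (n %/ q) 1 + INR b + (2 * INR b + 1) * (eps * INR s * INR n / INR b)
    <= (1 - eps) * INR (degG (@Hends n s) v).
Proof.
move=> de0 eps0 eps_lt q_gt n_ge s_gt0 b_gt0 n_gt b_le v.
have q0 : 0 < INR q by have := Rdiv_lt_0_compat 8 de ltac:(lra) de0; lra.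
have q_gt0 : (0 < q)%nat by apply/ltP/INR_lt.
have q_le_n : (q <= n)%nat by lia.
have n1 : 1 < INR n by apply: (lt_INR 1); apply/ltP; lia.
have s1 : 1 <= INR s by apply: (le_INR 1); apply/leP.
have b1 : 1 <= INR b by apply: (le_INR 1); apply/leP.
have lnn0 : 0 < ln (INR n) by rewrite -ln_1; apply: ln_increasing; lra.
have b_ln := mul_ln_le_of_le_div n1 b_le.
have b_ln0 : 0 < INR b * ln (INR n) by nra.
have sn0 : 0 < INR s * INR n by nra.
have de_lt1 : de < 1 by nra.
have lnq_le : INR b * (ln (8 * INR q) + 1) <= de / 4 * (INR s * INR n).
  have := Rmult_lt_compat_l (de / 4) _ _ ltac:(lra) (ln_increasing _ _ (exp_pos _) n_gt).
  rewrite ln_exp.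
  have -> : de / 4 * (4 * (ln (8 * INR q) + 1) / de) = ln (8 * INR q) + 1 by field; lra.
  nra.
have K_le : INR (n %/ q) <= de / 8 * INR n.
  have -> : de / 8 * INR n = INR n / (8 / de) by field; lra.
  by apply: INR_divn_le; first apply: Rdiv_lt_0_compat; lra.
have deg_ge : INR s * (INR n - 1) <= INR (degG (@Hends n s) v).
  have n_gt0 : (0 < n)%nat by lia.
  have pred_n : INR n.-1 = INR n - 1 by rewrite -{2}(prednK n_gt0) S_INR; ring.
  by have /leP/le_INR := @H_degG n s v; rewrite mult_INR pred_n.
have esn0 : 0 <= eps * (INR s * INR n) by apply: Rmult_le_pos; lra.
have := Rmult_lt_compat_r _ _ _ sn0 eps_lt.
have := Rmult_le_pos _ _ (Rlt_le _ _ eps0) (pos_INR s).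
have := mul_succ_double_div_le (X := eps * INR s * INR n) b1 ltac:(lra).
have := Rmult_le_compat_l (INR b) _ _ (pos_INR b) (ln_div_bound q_gt0 q_le_n).
have := Rmult_le_compat_l (INR s) _ _ (pos_INR s) K_le.
have := Rmult_le_compat_l (1 - eps) _ _ ltac:(lra) deg_ge.
rewrite cover_bound_1; lra.
Qed.

End Budget.

Theorem lemma2p6 :
  forall delta : R, (0 < delta)%R ->
  exists eps' : R, (0 < eps')%R /\
  forall eps : R, (0 < eps)%R -> (eps < eps')%R ->
  exists N : nat, forall n : nat, (N <= n)%nat ->
  forall s' : nat, (0 < s')%nat ->
  forall b : nat, (0 < b)%nat ->
  (INR b <= (1 - delta) * (INR s' * INR n) / ln (INR n))%R ->
  splus_wins (@Hends n s') b (eps * INR s' * INR n / INR b)%R eps.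
Proof.
move=> de de_gt0; exists (de / 8)%R; split; first lra.
move=> eps eps_gt0 eps_lt.
have [q q_gt] := INR_unbounded (8 / de).
have [N N_gt] := INR_unbounded (exp (4 * (ln (8 * INR q) + 1) / de)).
exists (N + 2 * q)%nat => n n_ge s s_gt0 b b_gt0 b_le.
have q_gt0 : (0 < q)%nat.
  by apply/ltP/INR_lt; have := Rdiv_lt_0_compat 8 de ltac:(lra) de_gt0; simpl; lra.
have K_gt0 : (0 < n %/ q)%nat by rewrite divn_gt0 //; lia.
have K_le_m : (n %/ q <= 2 * n)%nat by apply: leq_trans (leq_div n q) _; lia.
have card_V_le_m : (#|HV n| <= 2 * n)%nat by rewrite card_HV.
apply: (splus_wins_of_rdanger_le
          (reachable_rdanger_le (@H_multiplicity n s) K_gt0 K_le_m card_V_le_m)).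
- lra.
- apply: (@H_budget de) => //; first lia.
  by apply: Rlt_le_trans N_gt _; apply: le_INR; apply/leP; lia.
Qed.
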